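(* Let $Q$ be a $D$-dimensional convex polytope in $\mathbb{R}^D$ with $m$ vertices. Then $Q$ is locally point symmetric if and only if $Q$ has exactly $m/2$ (unordered) pairs of strictly antipodal vertices.
   Context: $Q$ is $D$-dimensional means its affine hull is $\mathbb{R}^D$. Two vertices $\mathbf{u},\mathbf{v}$ of a convex polytope $Q$ are strictly antipodal if there exist parallel supporting hyperplanes $H_1,H_2$ of $Q$ with $H_1\cap Q=\{\mathbf{u}\}$ and $H_2 \cap Q = \{\mathbf{v}\}$. The supporting cone of $Q$ at a vertex $\mathbf{v}$ is $C(\mathbf{v}) = \mathbf{v} + \bigcup_{\lambda \ge 0}\lambda(Q - \mathbf{v})$. A convex polytope $Q$ with $m$ vertices is locally point symmetric if its vertices can be partitioned into $m/2$ pairs of strictly antipodal vertices such that for each pair $\{\mathbf{u},\mathbf{v}\}$, $C(\mathbf{u}) - \mathbf{u} = \mathbf{v} - C(\mathbf{v})$. *)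

From mathcomp Require Import all_boot all_order all_algebra.
From mathcomp Require Import boolp classical_sets.
From mathcomp Require Import finmap.

Set Implicit Arguments.
Unset Strict Implicit.
Unset Printing Implicit Defensive.

Import Order.TTheory GRing.Theory Num.Theory.
Local Open Scope ring_scope.
Local Open Scope classical_set_scope.

Section Polytopes.
Variables (R : realFieldType) (D : nat).
Notation point := 'rV[R]_D.

Definition dotp (a x : point) : R := \sum_(i < D) a 0 i * x 0 i.

Definition conv (A : set point) : set point :=
  [set x | exists (n : nat) (p : 'I_n -> point) (w : 'I_n -> R),
      [/\ forall i, A (p i), forall i, 0 <= w i, \sum_i w i = 1
        & x = \sum_i w i *: p i]].

Definition affine_hull (A : set point) : set point :=
  [set x | exists (n : nat) (p : 'I_n -> point) (w : 'I_n -> R),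
      [/\ forall i, A (p i), \sum_i w i = 1 & x = \sum_i w i *: p i]].

Definition is_polytope (Q : set point) : Prop :=
  exists S : seq point, Q = conv [set x | x \in S].

Definition full_dim (Q : set point) : Prop := affine_hull Q = setT.

Definition is_vertex (Q : set point) (v : point) : Prop :=
  Q v /\ forall x y (t : R), Q x -> Q y -> 0 < t < 1 ->
    v = t *: x + (1 - t) *: y -> x = v /\ y = v.

Definition hyperplane (a : point) (b : R) : set point := [set x | dotp a x = b].

Definition supporting (Q : set point) (a : point) (b : R) : Prop :=
  a != 0 /\
  ((forall x, Q x -> dotp a x <= b) \/ (forall x, Q x -> b <= dotp a x)) /\
  (exists x, Q x /\ dotp a x = b).

Definition strictly_antipodal (Q : set point) (u v : point) : Prop :=
  exists (a1 a2 : point) (b1 b2 : R) (c : R),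
    [/\ supporting Q a1 b1, supporting Q a2 b2,
        (c != 0 /\ a2 = c *: a1),
        hyperplane a1 b1 <> hyperplane a2 b2
      & (hyperplane a1 b1 `&` Q = [set u] /\
         hyperplane a2 b2 `&` Q = [set v])].

Definition supp_cone (Q : set point) (v : point) : set point :=
  [set x | exists (lam : R) (q : point), [/\ 0 <= lam, Q q & x = v + lam *: (q - v)]].

(* Locally point symmetric, given the (finite) vertex set V of Q with m = #|V|
   vertices: V is partitioned into pairs {u, p u} (p a fixed-point-free
   involution of V) of strictly antipodal vertices with
   C(u) - u = v - C(v). *)
Definition locally_point_symmetric (Q : set point) (V : {fset point}) : Prop :=
  exists p : point -> point,
    forall u, u \in V ->
      [/\ p u \in V, p u != u, p (p u) = u,
          strictly_antipodal Q u (p u)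
        & [set x | exists2 c, supp_cone Q u c & x = c - u] =
          [set x | exists2 c, supp_cone Q (p u) c & x = p u - c]].

Definition antipodal_pairs (Q : set point) (V : {fset point}) : {fset {fset point}} :=
  [fset [fset u; v]%fset | u in V, v in V & `[< strictly_antipodal Q u v >]]%fset.

End Polytopes.

(* Two vertices u, v are strictly antipodal iff some direction a attains its
   maximum on Q only at u and its minimum only at v.  Every vertex is exposed
   by some direction (Farkas' lemma), and tilting that direction so that its
   minimum also becomes unique produces a strictly antipodal partner, unless Q
   is a single point.  Counting the edges of the symmetric antipodality
   relation, 2 * #pairs = m holds iff every vertex has exactly one partner.
   If C(u) - u = v - C(v), every direction exposing u is minimized only at v,
   so v is the only partner of u.  Conversely, if u and v are each other's only
   partners and some point of C(u) - u were not in v - C(v), a direction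
   separating it from v - C(v) (Farkas again) could be tilted into one whose
   minimizer is v and whose maximizer is a second partner of v. *)

From mathcomp Require Import all_boot all_order all_algebra.
From mathcomp Require Import boolp classical_sets reals.
From mathcomp Require Import finmap.
From mathcomp Require Import ring lra.
Import Order.TTheory GRing.Theory Num.Theory.
Local Open Scope ring_scope.
Local Open Scope classical_set_scope.

Set Implicit Arguments.
Unset Strict Implicit.
Unset Printing Implicit Defensive.

Local Notation hull S := (conv [set x | x \in S]).

Section Dotp.
Variables (R : realFieldType) (n : nat).
Implicit Types (a b x y : 'rV[R]_n) (k : R).

Lemma dotpDl a b x : dotp (a + b) x = dotp a x + dotp b x.
Proof. by rewrite /dotp -big_split; apply: eq_bigr => i _; rewrite mxE mulrDl. Qed.

Lemma dotpDr a x y : dotp a (x + y) = dotp a x + dotp a y.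
Proof. by rewrite /dotp -big_split; apply: eq_bigr => i _; rewrite mxE mulrDr. Qed.

Lemma dotpZl k a x : dotp (k *: a) x = k * dotp a x.
Proof. by rewrite /dotp mulr_sumr; apply: eq_bigr => i _; rewrite mxE mulrA. Qed.

Lemma dotpZr k a x : dotp a (k *: x) = k * dotp a x.
Proof. by rewrite /dotp mulr_sumr; apply: eq_bigr => i _; rewrite mxE mulrCA. Qed.

Lemma dotpNl a x : dotp (- a) x = - dotp a x.
Proof. by rewrite -scaleN1r dotpZl mulN1r. Qed.

Lemma dotpNr a x : dotp a (- x) = - dotp a x.
Proof. by rewrite -scaleN1r dotpZr mulN1r. Qed.

Lemma dotpBl a b x : dotp (a - b) x = dotp a x - dotp b x.
Proof. by rewrite dotpDl dotpNl. Qed.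

Lemma dotpBr a x y : dotp a (x - y) = dotp a x - dotp a y.
Proof. by rewrite dotpDr dotpNr. Qed.

Lemma dotp0l x : dotp 0 x = 0.
Proof. by rewrite /dotp big1 // => i _; rewrite mxE mul0r. Qed.

Lemma dotp0r x : dotp x 0 = 0.
Proof. by rewrite /dotp big1 // => i _; rewrite mxE mulr0. Qed.

Lemma dotpC a x : dotp a x = dotp x a.
Proof. by apply: eq_bigr => i _; rewrite mulrC. Qed.

Lemma dotp_sumr m (w : 'I_m -> R) (p : 'I_m -> 'rV[R]_n) a :
  dotp a (\sum_i w i *: p i) = \sum_i w i * dotp a (p i).
Proof.
elim: m w p => [|m IH] w p; first by rewrite !big_ord0 dotp0r.
by rewrite !big_ord_recl dotpDr dotpZr IH.
Qed.

Lemma dotp_gt0 x : x != 0 -> 0 < dotp x x.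
Proof.
move=> /eqP x_neq0; have sq_ge0 i : 0 <= x 0 i * x 0 i by rewrite -expr2 sqr_ge0.
rewrite lt_def sumr_ge0 // andbT; apply: contra_notN x_neq0 => /eqP sum0.
apply/rowP => i; rewrite mxE; apply/eqP.
have /eqP := @psumr_eq0P _ _ xpredT _ (fun i _ => sq_ge0 i) sum0 i isT.
by rewrite mulf_eq0 orbb.
Qed.

Lemma dotp_row (g y : 'rV[R]_n) (c r : 'rV[R]_1) :
  dotp (row_mx g c) (row_mx y r) = dotp g y + dotp c r.
Proof.
by rewrite /dotp big_split_ord; congr (_ + _); apply: eq_bigr => i _;
  rewrite ?row_mxEl ?row_mxEr.
Qed.

End Dotp.

Section Farkas.
Variables (R : realFieldType) (n : nat).
Notation vec := 'rV[R]_n.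

Fixpoint in_cone (s : seq vec) (x : vec) : Prop :=
  if s is z :: s' then exists2 mu : R, 0 <= mu & in_cone s' (x - mu *: z)
  else x = 0.

Lemma in_coneP (s : seq vec) x : in_cone s x ->
  exists m (p : 'I_m -> vec) (w : 'I_m -> R),
    [/\ forall i, p i \in s, forall i, 0 <= w i & x = \sum_i w i *: p i].
Proof.
elim: s x => [|z s IH] x /=.
  by move=> ->; exists 0%N, (fun _ => 0), (fun _ => 0); split=> [[]|[]|];
    rewrite ?big_ord0.
case=> mu mu_ge0 /IH [m [p [w [ps w_ge0 def_x]]]].
exists m.+1, (fun i => if unlift ord0 i is Some j then p j else z),
  (fun i => if unlift ord0 i is Some j then w j else mu); split.
- by move=> i; case: unliftP => [j _|_]; rewrite inE ?eqxx ?ps ?orbT.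
- by move=> i; case: unliftP.
rewrite big_ord_recl /= unlift_none.
under eq_bigr do rewrite liftK.
by rewrite -def_x addrC subrK.
Qed.

(* The elimination step of [farkas]: projecting the generators along [z] onto
   the hyperplane [dotp g _ = 0] keeps cone membership up to a multiple of [z]. *)
Lemma in_cone_project (g z : vec) a (s : seq vec) x : a != 0 ->
  (forall y, y \in s -> 0 <= dotp g y) ->
  in_cone [seq a *: y - dotp g y *: z | y <- s] x ->
  exists2 t, 0 <= t & in_cone s (a^-1 *: (x + t *: z)).
Proof.
move=> a_neq0; elim: s x => [|y s IH] x g_ge0 /=.
  by move=> ->; exists 0; rewrite // scale0r addr0 scaler0.
have gy_ge0 := g_ge0 y (mem_head _ _).
case=> mu mu_ge0 /IH [|t t_ge0 cone_s].
  by move=> y' y's; apply: g_ge0; rewrite inE y's orbT.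
exists (t + mu * dotp g y); first by rewrite addr_ge0 // mulr_ge0.
exists mu => //; congr (in_cone s _): cone_s.
by apply/rowP => i; rewrite !mxE; field.
Qed.

Lemma farkas (s : seq vec) x : ~ in_cone s x ->
  exists g : vec, (forall y, y \in s -> 0 <= dotp g y) /\ dotp g x < 0.
Proof.
have [k] := ubnP (size s); elim: k s x => // k IH [|z s] x /=.
  move=> _ /eqP x_neq0; exists (- x); split => //.
  by rewrite dotpNl oppr_lt0 dotp_gt0.
rewrite ltnS => size_s x_notin.
have [g [g_ge0 gx_lt0]] : exists g : vec,
    (forall y, y \in s -> 0 <= dotp g y) /\ dotp g x < 0.
  by apply: IH => // x_in; apply: x_notin; exists 0; rewrite // scale0r subr0.
have [gz_ge0|gz_lt0] := leP 0 (dotp g z).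
  by exists g; split => // y; rewrite inE => /predU1P[->|/g_ge0].
set a := dotp g z; have a_neq0 : a != 0 by rewrite lt_eqF.
set x' := a *: x - dotp g x *: z.
have [h [h_ge0 hx'_lt0]] : exists h : vec,
    (forall y, y \in [seq a *: y - dotp g y *: z | y <- s] -> 0 <= dotp h y) /\
    dotp h x' < 0.
  apply: IH; first by rewrite size_map.
  move=> /(in_cone_project a_neq0 g_ge0) [t t_ge0 cone_s]; apply: x_notin.
  exists ((dotp g x - t) / a); first by rewrite mulr_le0 ?invr_le0 ?ltW //; lra.
  by congr (in_cone s _): cone_s; apply/rowP => i; rewrite /x' !mxE; field.
exists (a *: h - dotp h z *: g); split.
  move=> y; rewrite inE => /predU1P[->|ys].
    by rewrite dotpBl !dotpZl -/a mulrC subrr.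
  have := h_ge0 _ (map_f (fun y => a *: y - dotp g y *: z) ys).
  by rewrite dotpBl !dotpZl dotpBr !dotpZr [dotp g y * _]mulrC.
by move: hx'_lt0; rewrite /x' dotpBr !dotpZr dotpBl !dotpZl [dotp g x * _]mulrC.
Qed.

End Farkas.

Section SmallScale.
Variables (R : realFieldType) (T : eqType).

Lemma small_scale_lt (P : pred T) (F G : T -> R) (s : seq T) :
  (forall x, x \in s -> P x -> 0 < G x) ->
  exists2 e, 0 < e & forall e', 0 < e' <= e ->
    forall x, x \in s -> P x -> e' * F x < G x.
Proof.
elim: s => [|x s IH] G_gt0; first by exists 1 => // e' _ x; rewrite in_nil.
have [e e_gt0 small_e] := IH (fun y ys => G_gt0 y (mem_behead (s := x :: s) ys)).
have [Px|nPx] := boolP (P x); last first.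
  exists e => // e' e'_small y /predU1P[->|ys]; first by rewrite (negPf nPx).
  exact: small_e.
have Gx_gt0 := G_gt0 x (mem_head _ _) Px.
have k_gt0 : 0 < `|F x| + 1 by rewrite ltr_wpDl.
exists (Order.min e (G x / (`|F x| + 1))); first by rewrite lt_min e_gt0 divr_gt0.
move=> e' /andP[e'_gt0]; rewrite le_min => /andP[e'_le_e e'_le] y.
case/predU1P => [-> _|ys]; last by apply: small_e; rewrite ?e'_gt0.
move: e'_le; rewrite ler_pdivlMr // => e'_le; have := ler_norm (F x); nra.
Qed.

Lemma seq_argmin (f : T -> R) (s : seq T) x0 : x0 \in s ->
  exists2 x, x \in s & forall y, y \in s -> f x <= f y.
Proof.
elim: s x0 => // z [|z' s] IH x0 _.
  by exists z; rewrite ?mem_head // => y /predU1P[->|].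
have [x xs x_min] := IH z' (mem_head _ _).
have [fz_le|fx_lt] := leP (f z) (f x).
  exists z; first exact: mem_head.
  by move=> y /predU1P[->//|/x_min]; apply: le_trans.
exists x; first by rewrite inE xs orbT.
by move=> y /predU1P[->|/x_min//]; apply: ltW.
Qed.

End SmallScale.

Section Exposed.
Variables (R : realFieldType) (D : nat).
Notation point := 'rV[R]_D.
Implicit Types (A Q : set point) (S : seq point) (a u v x : point).

Definition exposed Q a u := Q u /\ forall q, Q q -> q <> u -> dotp a q < dotp a u.

Definition exposed_in S a u := forall s, s \in S -> s <> u -> dotp a s < dotp a u.

Lemma sub_conv A : A `<=` conv A.
Proof.
move=> x Ax; exists 1%N, (fun _ => x), (fun _ => 1).
by split; rewrite ?big_ord1 ?scale1r.
Qed.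

Lemma conv_dotp_le A a M q : (forall s, A s -> dotp a s <= M) ->
  conv A q -> dotp a q <= M.
Proof.
move=> A_le [m [p [w [pA w_ge0 w_sum1 ->]]]].
rewrite dotp_sumr -[M]mul1r -w_sum1 mulr_suml.
by apply: ler_sum => i _; apply: ler_wpM2l => //; apply: A_le.
Qed.

Lemma conv_nonempty A x : conv A x -> exists s, A s.
Proof.
case=> [[|m] [p [w [pA _ w_sum1 _]]]]; last by exists (p ord0).
by move: w_sum1; rewrite big_ord0 => /eqP; rewrite eq_sym oner_eq0.
Qed.

Lemma conv_const A u q : (forall s, A s -> s = u) -> conv A q -> q = u.
Proof.
move=> A_u [m [p [w [pA _ w_sum1 ->]]]].
under eq_bigr do rewrite (A_u _ (pA _)).
by rewrite -scaler_suml w_sum1 scale1r.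
Qed.

Lemma exposed_le Q a u x : exposed Q a u -> Q x -> dotp a x <= dotp a u.
Proof.
by move=> [_ u_max] Qx; have [->//|/eqP xu] := eqVneq x u; exact/ltW/u_max.
Qed.

Lemma exposed_uniq Q a u v : exposed Q a u -> exposed Q a v -> u = v.
Proof.
move=> [Qu u_max] [Qv v_max]; have [//|/eqP uv] := eqVneq u v.
by have := lt_trans (v_max _ Qu uv) (u_max _ Qv (nesym uv)); rewrite ltxx.
Qed.

Lemma exposedZ Q c a u : 0 < c -> exposed Q (c *: a) u -> exposed Q a u.
Proof.
by move=> c_gt0 [Qu u_max]; split=> // q Qq qu; move: (u_max q Qq qu);
  rewrite !dotpZl ltr_pM2l.
Qed.

Lemma exposed_vertex Q a u : exposed Q a u -> is_vertex Q u.
Proof.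
move=> exp_u; split=> [|x y t Qx Qy /andP[t_gt0 t_lt1] def_u]; first exact: exp_u.1.
have ax := exposed_le exp_u Qx; have ay := exposed_le exp_u Qy.
have au : dotp a u = t * dotp a x + (1 - t) * dotp a y.
  by rewrite {1}def_u dotpDr !dotpZr.
have [-> | /eqP xu] := eqVneq x u; last first.
  by have xu_lt := exp_u.2 x Qx xu; exfalso; nra.
have [-> // | /eqP yu] := eqVneq y u.
by have yu_lt := exp_u.2 y Qy yu; exfalso; nra.
Qed.

Lemma exposed_conv S a u : hull S u -> exposed_in S a u ->
  exposed (hull S) a u.
Proof.
move=> Cu S_lt; split=> // q [m [p [w [pS w_ge0 w_sum1 def_q]]]] qu.
rewrite ltNge; apply: contra_notN qu => au_le.
have gap_ge0 i : 0 <= w i * (dotp a u - dotp a (p i)).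
  rewrite mulr_ge0 // subr_ge0; have [->//|/eqP pu] := eqVneq (p i) u.
  exact: ltW (S_lt _ (pS i) pu).
have gap_sum : \sum_i w i * (dotp a u - dotp a (p i)) = dotp a u - dotp a q.
  rewrite def_q dotp_sumr -[X in X - _]mul1r -w_sum1 mulr_suml -sumrB.
  by apply: eq_bigr => i _; rewrite mulrBr.
have gap_sum0 : \sum_i w i * (dotp a u - dotp a (p i)) = 0.
  by apply/le_anti; rewrite sumr_ge0 // andbT gap_sum subr_le0.
rewrite def_q -[u]scale1r -w_sum1 scaler_suml; apply: eq_bigr => i _.
have [->//|/eqP pu] := eqVneq (p i) u.
have /eqP := @psumr_eq0P _ _ xpredT _ (fun i _ => gap_ge0 i) gap_sum0 i isT.
rewrite mulf_eq0 subr_eq0 => /predU1P[->|/eqP au]; first by rewrite !scale0r.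
by have := S_lt _ (pS i) pu; rewrite au ltxx.
Qed.

End Exposed.

Lemma sum_row_mx (R : nmodType) m n1 n2 (I : finType)
    (A1 : I -> 'M[R]_(m, n1)) (A2 : I -> 'M[R]_(m, n2)) :
  \sum_i row_mx (A1 i) (A2 i) = row_mx (\sum_i A1 i) (\sum_i A2 i).
Proof.
apply: (big_rec3 (fun s1 s2 s3 => s1 = row_mx s2 s3)); first by rewrite row_mx0.
by move=> i _ s2 s3 _ ->; rewrite add_row_mx.
Qed.

Section Vertices.
Variables (R : realFieldType) (D : nat).
Notation point := 'rV[R]_D.
Implicit Types (A : set point) (S : seq point) (a u : point).

Lemma vertex_conv_combination A u m (p : 'I_m -> point) (w : 'I_m -> R) :
  is_vertex (conv A) u -> (forall i, A (p i)) -> (forall i, 0 <= w i) ->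
  \sum_i w i = 1 -> u = \sum_i w i *: p i -> exists i, p i = u.
Proof.
move=> u_vert; elim: m p w => [|m IH] p w pA w_ge0 w_sum1 def_u.
  by move: w_sum1; rewrite big_ord0 => /eqP; rewrite eq_sym oner_eq0.
have [p0u|p0u] := eqVneq (p ord0) u; first by exists ord0.
rewrite big_ord_recl in w_sum1; rewrite big_ord_recl in def_u.
set rho := \sum_(i < m) w (lift ord0 i) in w_sum1.
have [w00|w0_neq0] := eqVneq (w ord0) 0.
  have rho1 : rho = 1 by move: w_sum1; rewrite w00 add0r.
  have def_u' : u = \sum_(i < m) w (lift ord0 i) *: p (lift ord0 i).
    by move: def_u; rewrite w00 scale0r add0r.
  have [i <-] := IH _ _ (fun i => pA _) (fun i => w_ge0 _) rho1 def_u'.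
  by exists (lift ord0 i).
have rho_ge0 : 0 <= rho by apply: sumr_ge0.
have [rho0|rho_neq0] := eqVneq rho 0.
  have w01 : w ord0 = 1 by move: w_sum1; rewrite rho0 addr0.
  suff def_u0 : u = p ord0 by exists ord0.
  rewrite def_u w01 scale1r big1 ?addr0 // => i _.
  have := @psumr_eq0P _ _ xpredT _ (fun i _ => w_ge0 (lift ord0 i)) rho0 i isT.
  by move=> ->; rewrite scale0r.
set r := \sum_(i < m) (w (lift ord0 i) / rho) *: p (lift ord0 i).
have conv_r : conv A r.
  exists m, (fun i => p (lift ord0 i)), (fun i => w (lift ord0 i) / rho).
  by split=> // [i|]; rewrite ?divr_ge0 // -mulr_suml divff.
have split_u : u = w ord0 *: p ord0 + (1 - w ord0) *: r.
  rewrite def_u /r scaler_sumr -w_sum1 addrAC subrr add0r; congr (_ + _).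
  by apply: eq_bigr => i _; rewrite scalerA mulrC divfK.
have w0_01 : 0 < w ord0 < 1.
  by rewrite lt_def w0_neq0 w_ge0 /= -w_sum1 ltrDl lt_def rho_neq0.
have [/eqP] := u_vert.2 _ _ _ (sub_conv (pA ord0)) conv_r w0_01 split_u.
by rewrite (negPf p0u).
Qed.

(* Homogenization: [u] is exposed in [S] iff the lifted vectors [(s - u, -1)]
   do not generate [(0, -1)]. *)
Definition lifted_cone S u : seq 'rV[R]_(D + 1) :=
  [seq row_mx (s - u) (const_mx (-1)) | s <- S & s != u].

Lemma vertex_notin_lifted_cone S u : is_vertex (hull S) u ->
  ~ in_cone (lifted_cone S u) (row_mx 0 (const_mx (-1))).
Proof.
move=> u_vert /in_coneP [m [p [w [p_gen w_ge0 def_0]]]].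
have /choice[sf /all_and3[sfS sfu def_p]] : forall i, exists s,
    [/\ s \in S, s != u & p i = row_mx (s - u) (const_mx (-1))].
  move=> i; case/mapP: (p_gen i) => s.
  by rewrite mem_filter => /andP[su sS] ->; exists s.
move: def_0; under eq_bigr do rewrite def_p scale_row_mx.
rewrite sum_row_mx -scaler_suml => /eq_row_mx[comb0 /rowP/(_ ord0)].
rewrite !mxE mulrN1 => /oppr_inj/esym w_sum1.
have def_u : u = \sum_i w i *: sf i.
  apply/esym/eqP; rewrite -subr_eq0 -[X in _ - X]scale1r -w_sum1 scaler_suml.
  by rewrite -sumrB [X in _ == X]comb0; apply/eqP/eq_bigr => i _; rewrite scalerBr.
have [i sfi_u] := vertex_conv_combination u_vert sfS w_ge0 w_sum1 def_u.
by have := sfu i; rewrite sfi_u eqxx.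
Qed.

Lemma vertex_exposed_in S u : is_vertex (hull S) u ->
  exists b, exposed_in S b u.
Proof.
move=> /vertex_notin_lifted_cone /farkas [G [G_ge0 G_lt0]].
rewrite -(hsubmxK G) in G_ge0 G_lt0.
move: G_lt0; rewrite dotp_row dotp0r add0r => last_lt0.
exists (- lsubmx G) => s sS /eqP su.
have := G_ge0 _ (map_f _ (_ : s \in [seq s <- S | s != u])).
rewrite mem_filter su sS => /(_ isT); rewrite dotp_row dotpBr !dotpNl.
lra.
Qed.

(* Tilting [a] by a small multiple of the minimizer of [a] of largest norm makes
   the minimum over [S] unique, without losing the exposure of [u]. *)
Lemma exposed_in_tilt S a u s0 : s0 \in S -> exposed_in S a u ->
  exists a' w, [/\ w \in S, exposed_in S a' u, exposed_in S (- a') w &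
                   forall s, s \in S -> dotp a w <= dotp a s].
Proof.
move=> s0S a_exp.
have [w1 w1S w1_min] := seq_argmin (dotp a) s0S.
set S1 := [seq s <- S | dotp a s == dotp a w1].
have w1S1 : w1 \in S1 by rewrite mem_filter eqxx.
have [w wS1 w_max] := seq_argmin (fun s => - dotp s s) w1S1.
move: wS1; rewrite mem_filter => /andP[/eqP aw wS].
have [e1 e1_gt0 small_e1] := @small_scale_lt _ _ (fun s => s != u)
  (fun s => dotp w u - dotp w s) (fun s => dotp a u - dotp a s) S
  (fun s sS su => ltac:(by rewrite subr_gt0; apply: a_exp => //; apply/eqP)).
have [e2 e2_gt0 small_e2] := @small_scale_lt _ _ (fun s => dotp a w < dotp a s)
  (fun s => dotp w s - dotp w w) (fun s => dotp a s - dotp a w) S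
  (fun s sS ws => ltac:(by rewrite subr_gt0)).
set e := Order.min e1 e2.
have e_gt0 : 0 < e by rewrite lt_min e1_gt0 e2_gt0.
have e_e1 : 0 < e <= e1 by rewrite e_gt0 ge_min lexx.
have e_e2 : 0 < e <= e2 by rewrite e_gt0 ge_min lexx orbT.
exists (a - e *: w), w; split=> //.
- move=> s sS su; rewrite !dotpBl !dotpZl.
  by have := small_e1 e e_e1 s sS (introN eqP su); lra.
- move=> s sS sw; rewrite !dotpNl ltrN2 !dotpBl !dotpZl.
  have [aws|asw] := ltP (dotp a w) (dotp a s).
    by have := small_e2 e e_e2 s sS aws; lra.
  have as_eq : dotp a s = dotp a w by apply/le_anti; rewrite asw aw w1_min.
  have /w_max ww_ge : s \in S1 by rewrite mem_filter sS as_eq aw eqxx.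
  have : 0 < dotp (w - s) (w - s).
    by apply: dotp_gt0; rewrite subr_eq0 eq_sym; apply/eqP.
  by rewrite !dotpBl !dotpBr (dotpC s w) as_eq; nra.
- by move=> s sS; rewrite aw w1_min.
Qed.

End Vertices.

Section Antipodal.
Variables (R : realFieldType) (D : nat).
Notation point := 'rV[R]_D.
Implicit Types (Q : set point) (a u w : point).

Lemma exposed_supporting Q a u : a != 0 -> exposed Q a u ->
  supporting Q a (dotp a u).
Proof.
move=> a_neq0 u_exp; do !split=> //; last by exists u; split=> //; exact: u_exp.1.
by left=> x /(exposed_le u_exp).
Qed.

Lemma exposed_face Q a u : exposed Q a u -> hyperplane a (dotp a u) `&` Q = [set u].
Proof.
move=> [Qu u_max]; apply/seteqP; split=> [x [ax Qx]|x ->] //=.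
have [//|/eqP xu] := eqVneq x u.
by have := u_max x Qx xu; rewrite ax ltxx.
Qed.

Lemma supporting_face_exposed Q a b u : supporting Q a b ->
  hyperplane a b `&` Q = [set u] -> exposed Q a u \/ exposed Q (- a) u.
Proof.
move=> [_ [side _]] face.
have [au Qu] : dotp a u = b /\ Q u by have : (hyperplane a b `&` Q) u by rewrite face.
have face_u q : Q q -> q <> u -> dotp a q != b.
  by move=> Qq qu; apply/eqP => aq; apply: qu; suff : (hyperplane a b `&` Q) q
    by rewrite face.
case: side => [a_le|a_ge]; [left|right]; split=> // q Qq /(face_u q Qq) aq.
  by rewrite au lt_neqAle aq a_le.
by rewrite !dotpNl ltrN2 au lt_neqAle eq_sym aq a_ge.
Qed.

Lemma strictly_antipodalP Q u w : strictly_antipodal Q u w <->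
  u <> w /\ exists a, exposed Q a u /\ exposed Q (- a) w.
Proof.
split=> [|[uw [a [u_exp w_exp]]]]; last first.
  have aw_lt : dotp a w < dotp a u by apply: u_exp.2 (w_exp.1) (nesym uw).
  have a_neq0 : a != 0 by apply: contraTneq aw_lt => ->; rewrite !dotp0l ltxx.
  exists a, (- a), (dotp a u), (dotp (- a) w), (-1); split.
  - exact: exposed_supporting.
  - by apply: exposed_supporting; rewrite ?oppr_eq0.
  - by rewrite scaleN1r oppr_eq0 oner_eq0.
  - move=> same_plane; have : hyperplane (- a) (dotp (- a) w) u by rewrite -same_plane.
    by rewrite /hyperplane /= !dotpNl => /oppr_inj au; move: aw_lt; rewrite au ltxx.
  - by split; apply: exposed_face.
case=> a1 [a2 [b1 [b2 [c [sup1 sup2 [c_neq0 def_a2] planes_neq [face1 face2]]]]]].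
subst a2.
have [a1u Qu] : dotp a1 u = b1 /\ Q u by have : (hyperplane a1 b1 `&` Q) u by rewrite face1.
have [a1w Qw] : dotp (c *: a1) w = b2 /\ Q w.
  by have : (hyperplane (c *: a1) b2 `&` Q) w by rewrite face2.
have uw : u <> w.
  move=> eq_uw; apply: planes_neq; rewrite -a1u -a1w -eq_uw.
  apply/seteqP; split=> x; rewrite /hyperplane /= !dotpZl; first by move=> ->.
  exact: mulfI.
have w_exp : exposed Q a1 w \/ exposed Q (- a1) w.
  have [c_gt0|c_le0] := ltP 0 c.
    by case: (supporting_face_exposed sup2 face2); rewrite -?scalerN
      => /(exposedZ c_gt0) w_exp; [left|right].
  have c_lt0 : 0 < - c by rewrite oppr_gt0 lt_neqAle c_neq0.
  have flip b : c *: b = - c *: - b by rewrite scalerN scaleNr opprK.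
  by case: (supporting_face_exposed sup2 face2); rewrite flip -?scalerN ?opprK
    => /(exposedZ c_lt0) w_exp; [right|left].
split=> //; case: (supporting_face_exposed sup1 face1) w_exp => u_exp [] w_exp;
  try by [exfalso; apply: uw; apply: exposed_uniq u_exp w_exp].
- by exists a1.
- by exists (- a1); rewrite opprK.
Qed.

Lemma strictly_antipodal_sym Q u w :
  strictly_antipodal Q u w -> strictly_antipodal Q w u.
Proof.
case/strictly_antipodalP=> uw [a [u_exp w_exp]]; apply/strictly_antipodalP.
by split; [exact: nesym | exists (- a); rewrite opprK].
Qed.

Lemma strictly_antipodal_vertex Q u w :
  strictly_antipodal Q u w -> is_vertex Q w.
Proof. by case/strictly_antipodalP=> _ [a [_ /exposed_vertex]]. Qed.

End Antipodal.

Section SupportingCones.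
Variables (R : realFieldType) (D : nat).
Notation point := 'rV[R]_D.
Implicit Types (Q : set point) (S : seq point) (a u v x : point).

Definition cone_at Q u : set point := [set x | exists2 c, supp_cone Q u c & x = c - u].

Lemma cone_atP Q u x :
  cone_at Q u x <-> exists lam q, [/\ 0 <= lam, Q q & x = lam *: (q - u)].
Proof.
split=> [[_ [lam [q [lam_ge0 Qq ->]]] ->]|[lam [q [lam_ge0 Qq ->]]]].
  by exists lam, q; split=> //; rewrite addrAC subrr add0r.
by exists (u + lam *: (q - u)); [exists lam, q | rewrite addrAC subrr add0r].
Qed.

Lemma exposed_in_le S a u q : exposed_in S a u ->
  hull S q -> dotp a q <= dotp a u.
Proof.
move=> u_exp; apply: conv_dotp_le => s sS.
by have [->//|/eqP su] := eqVneq s u; apply/ltW/u_exp.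
Qed.

Lemma vertex_antipodal_partner S u : is_vertex (hull S) u ->
  (exists w, strictly_antipodal (hull S) u w) \/ hull S `<=` [set u].
Proof.
move=> u_vert; have [s0 s0S] := conv_nonempty u_vert.1.
have [b b_exp] := vertex_exposed_in u_vert.
have [a [w [wS a_u a_w w_min]]] := exposed_in_tilt s0S b_exp.
have [wu|/eqP wu] := eqVneq w u.
  right=> q Cq; apply: (conv_const _ Cq) => s sS.
  have [//|/eqP su] := eqVneq s u.
  by have := w_min s sS; rewrite wu leNgt (b_exp s sS su).
left; exists w; apply/strictly_antipodalP; split; first exact: nesym.
by exists a; split; apply: exposed_conv; rewrite //; [exact: u_vert.1|exact: sub_conv].
Qed.

(* Tilting [g] by the direction exposing [v] makes [v] the unique minimizer,
   and the maximizer of the tilted direction is then antipodal to [v]. *)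
Lemma antipodal_partner_above S v g x :
  is_vertex (hull S) v -> hull S x ->
  (forall s, s \in S -> dotp g v <= dotp g s) ->
  (exists2 s, s \in S & dotp g x < dotp g s) ->
  exists2 w, strictly_antipodal (hull S) v w & w <> x.
Proof.
move=> v_vert Cx g_min [s sS gs_gt].
have [b b_exp] := vertex_exposed_in v_vert.
have [e e_gt0 small_e] := @small_scale_lt _ _ predT (fun s => dotp b s - dotp b x)
  (fun s => dotp g s - dotp g x) [:: s]
  (fun s' s's _ => ltac:(by move: s's; rewrite inE => /eqP ->; rewrite subr_gt0)).
have := small_e e; rewrite e_gt0 lexx => /(_ isT s (mem_head _ _) isT) {}small_e.
set h := g - e *: b.
have h_exp : exposed_in S (- h) v.
  move=> s' s'S s'v; rewrite !dotpNl ltrN2 !dotpBl !dotpZl.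
  have : e * dotp b s' < e * dotp b v by rewrite ltr_pM2l // b_exp.
  by have := g_min s' s'S; lra.
have hx_lt : dotp h x < dotp h s by rewrite !dotpBl !dotpZl; lra.
have hx_ge : dotp h v <= dotp h x.
  by have := exposed_in_le h_exp Cx; rewrite !dotpNl lerN2.
have [a [w [wS a_v a_w w_max]]] := exposed_in_tilt sS h_exp.
have hw_gt : dotp h x < dotp h w.
  by apply: lt_le_trans hx_lt _; have := w_max s sS; rewrite !dotpNl lerN2.
exists w; last by move=> wx; move: hw_gt; rewrite wx ltxx.
apply/strictly_antipodalP; split.
  by move=> vw; move: hw_gt; rewrite -vw ltNge hx_ge.
by exists a; split; apply: exposed_conv; rewrite //; [exact: v_vert.1|exact: sub_conv].
Qed.

Lemma in_cone_cone_at S v y : hull S v ->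
  in_cone [seq s - v | s <- S] y -> cone_at (hull S) v y.
Proof.
move=> Cv /in_coneP[m [p [w [pS w_ge0 def_y]]]]; apply/cone_atP.
have /choice[sf /all_and2[sfS def_p]] : forall i, exists s, s \in S /\ p i = s - v.
  by move=> i; case/mapP: (pS i) => s sS ->; exists s.
set M := \sum_i w i.
have {}def_y : y = \sum_i w i *: sf i - M *: v.
  by rewrite def_y scaler_suml -sumrB; apply: eq_bigr => i _; rewrite def_p scalerBr.
have [M0|M_neq0] := eqVneq M 0.
  exists 0, v; split=> //; rewrite scale0r def_y M0 scale0r subr0 big1 // => i _.
  by rewrite (@psumr_eq0P _ _ xpredT _ (fun i _ => w_ge0 i) M0 i isT) scale0r.
have M_ge0 : 0 <= M by apply: sumr_ge0.
exists M, (\sum_i (w i / M) *: sf i); split=> //.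
  exists m, sf, (fun i => w i / M); split=> //.
    by move=> i; apply: divr_ge0.
  by rewrite -mulr_suml divff.
rewrite def_y scalerBr scaler_sumr; congr (_ - _); apply: eq_bigr => i _.
by rewrite scalerA mulrC divfK.
Qed.

Lemma uniq_antipodal_cone_sub S u v :
  is_vertex (hull S) u -> is_vertex (hull S) v ->
  (forall w, strictly_antipodal (hull S) v w -> w = u) ->
  cone_at (hull S) u `<=` [set - x | x in cone_at (hull S) v].
Proof.
move=> u_vert v_vert v_partner _ /cone_atP[lam [q [lam_ge0 Cq ->]]].
exists (- (lam *: (q - u))); last by rewrite opprK.
case: (pselect (in_cone [seq s - v | s <- S] (- (lam *: (q - u))))).
  exact: in_cone_cone_at v_vert.1.
case/farkas=> g [g_ge0 gy_lt0]; exfalso.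
have g_min s : s \in S -> dotp g v <= dotp g s.
  by move=> sS; have := g_ge0 _ (map_f (fun s => s - v) sS); rewrite dotpBr subr_ge0.
have gq_gt : dotp g u < dotp g q.
  move: gy_lt0; rewrite dotpNr dotpZr dotpBr oppr_lt0 ltNge.
  by apply: contraNlt => gq_le; rewrite mulr_ge0_le0 // subr_le0.
have beyond : exists2 s, s \in S & dotp g u < dotp g s.
  apply: contrapT => no_s; suff : dotp g q <= dotp g u by rewrite leNgt gq_gt.
  apply: (conv_dotp_le _ Cq) => s sS; rewrite leNgt; apply/negP => gs.
  by apply: no_s; exists s.
have [w /v_partner -> ] := antipodal_partner_above v_vert u_vert.1 g_min beyond.
by move/(_ erefl).
Qed.

End SupportingCones.

Section ConeSymmetry.
Variables (R : realFieldType) (D : nat).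
Notation point := 'rV[R]_D.
Implicit Types (Q : set point) (S : seq point) (a u v w : point).

Lemma opp_cone_atE Q v :
  [set x | exists2 c, supp_cone Q v c & x = v - c] = [set - x | x in cone_at Q v].
Proof.
apply/seteqP; split=> [_ [c cv_c ->]|_ [x [c cv_c ->] <-]].
  by exists (c - v); [exists c | rewrite opprB].
by exists c; rewrite ?opprB.
Qed.

Lemma uniq_antipodal_cone S u v :
  is_vertex (hull S) u -> is_vertex (hull S) v ->
  (forall w, strictly_antipodal (hull S) v w -> w = u) ->
  (forall w, strictly_antipodal (hull S) u w -> w = v) ->
  cone_at (hull S) u = [set - x | x in cone_at (hull S) v].
Proof.
move=> u_vert v_vert v_partner u_partner; apply/seteqP.
split; first exact: uniq_antipodal_cone_sub.
move=> _ [x /(uniq_antipodal_cone_sub v_vert u_vert u_partner) [y yu <-] <-].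
by rewrite opprK.
Qed.

(* [v - q] lies in [C(u) - u], so [dotp a (v - q)] is a nonnegative multiple
   of [dotp a (q' - u) <= 0], vanishing only when [q = v]. *)
Lemma opp_cone_exposed Q a u v : exposed Q a u -> Q v ->
  cone_at Q u = [set - x | x in cone_at Q v] -> exposed Q (- a) v.
Proof.
move=> u_exp Qv cone_eq; split=> // q Qq qv; rewrite !dotpNl ltrN2.
have /cone_atP[lam [q' [lam_ge0 Qq' def_vq]]] : cone_at Q u (v - q).
  rewrite cone_eq; exists (q - v); last by rewrite opprB.
  by apply/cone_atP; exists 1, q; rewrite scale1r.
have vq_neq0 : v - q != 0 by rewrite subr_eq0; apply/eqP/nesym.
have [lam0|lam_neq0] := eqVneq lam 0.
  by move: vq_neq0; rewrite def_vq lam0 scale0r eqxx.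
have [q'u|/eqP q'u] := eqVneq q' u.
  by move: vq_neq0; rewrite def_vq q'u subrr scaler0 eqxx.
rewrite -subr_lt0 -dotpBr def_vq dotpZr dotpBr pmulr_rlt0; last first.
  by rewrite lt_def lam_neq0.
by rewrite subr_lt0; apply: u_exp.2.
Qed.

Lemma opp_cone_antipodal_eq Q u v w :
  cone_at Q u = [set - x | x in cone_at Q v] -> Q v ->
  strictly_antipodal Q u w -> w = v.
Proof.
move=> cone_eq Qv /strictly_antipodalP[_ [a [u_exp w_exp]]].
exact: exposed_uniq w_exp (opp_cone_exposed u_exp Qv cone_eq).
Qed.

End ConeSymmetry.

Lemma sum_nat_of_bool (I : Type) (s : seq I) (P : pred I) :
  (\sum_(p <- s) P p = count P s)%N.
Proof. by elim: s => [|x s IH]; rewrite ?big_nil ?big_cons ?IH. Qed.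

Section Matching.
Local Open Scope fset_scope.
Local Open Scope nat_scope.
Variables (T : choiceType) (V : {fset T}) (E : T -> T -> Prop).
Hypotheses (E_sym : forall u v, E u v -> E v u) (E_irr : forall u v, E u v -> u <> v).

Definition edge_pairs := [fset [fset u; v] | u in V, v in V & `[< E u v >]].

Lemma edge_pairsP p :
  p \in edge_pairs <-> exists u v, [/\ u \in V, v \in V, E u v & p = [fset u; v]].
Proof.
split=> [/imfset2P[u uV [v]]|[u [v [uV vV Euv ->]]]].
  by rewrite !inE /= => /andP[vV /asboolP Euv] ->; exists u, v.
by apply/imfset2P; exists u => //; exists v; rewrite // !inE /= vV; apply/asboolP.
Qed.

Definition degree u := count (fun p : {fset T} => u \in p) edge_pairs.

Lemma sum_degree : \sum_(u <- V) degree u = 2 * #|` edge_pairs|.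
Proof.
under eq_bigr do rewrite /degree -sum_nat_of_bool.
rewrite exchange_big /=; transitivity (\sum_(p <- edge_pairs) 2).
  apply: eq_big_seq => p /edge_pairsP[u [v [uV vV /E_irr/eqP uv ->]]].
  transitivity (count_mem u V + count_mem v V).
    rewrite -!sum_nat_of_bool -big_split /=; apply: eq_bigr => w _.
    by rewrite !inE; case: (eqVneq w u) => [->|]; rewrite ?(negPf uv).
  by rewrite !count_uniq_mem ?fset_uniq // uV vV.
by rewrite big_const_seq count_predT iter_addn_0 mulnC.
Qed.

Lemma degree_gt0 u v : u \in V -> v \in V -> E u v -> 0 < degree u.
Proof.
move=> uV vV Euv; rewrite -has_count; apply/hasP; exists [fset u; v].
  by apply/edge_pairsP; exists u, v.
by rewrite !inE eqxx.
Qed.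

Lemma degree_gt1 u v w : u \in V -> v \in V -> w \in V ->
  E u v -> E u w -> v <> w -> 1 < degree u.
Proof.
move=> uV vV wV Euv Euw vw; rewrite /degree -size_filter.
have -> : 2 = size [:: [fset u; v]; [fset u; w]] by [].
apply: uniq_leq_size.
  rewrite /= andbT inE; apply/eqP => uv_uw; apply: vw.
  have : w \in [fset u; v] by rewrite uv_uw !inE eqxx orbT.
  by rewrite !inE => /orP[/eqP wu|/eqP //]; case: (E_irr Euw).
move=> p; rewrite !inE mem_filter => /orP[] /eqP ->; rewrite !inE eqxx /=.
  by apply/edge_pairsP; exists u, v.
by apply/edge_pairsP; exists u, w.
Qed.

Lemma degree_eq1 u v : u \in V -> v \in V -> E u v ->
  (forall w, w \in V -> E u w -> w = v) -> degree u = 1.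
Proof.
move=> uV vV Euv partner_u.
have uv_pair : [fset u; v] \in edge_pairs by apply/edge_pairsP; exists u, v.
transitivity (count_mem [fset u; v] edge_pairs); last first.
  by rewrite count_uniq_mem ?fset_uniq // uv_pair.
apply: eq_in_count => p /edge_pairsP[a [b [aV bV Eab ->]]] /=.
apply/idP/eqP => [|->]; last by rewrite !inE eqxx.
rewrite !inE => /orP[/eqP ua|/eqP ub]; subst u.
  by rewrite (partner_u b bV Eab).
by rewrite (partner_u a aV (E_sym Eab)) fsetUC.
Qed.

(* Handshake count: with no isolated vertex, equality holds exactly when [E]
   is a perfect matching of [V]. *)
Lemma card_edge_pairs_uniq (has_partner : forall u, u \in V -> exists2 v, v \in V & E u v) :
  2 * #|` edge_pairs| = #|` V| <->
  forall u v w, u \in V -> v \in V -> w \in V -> E u v -> E u w -> v = w.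
Proof.
have deg_gt0 u : u \in V -> 0 < degree u.
  by move=> /[dup] uV /has_partner[v vV Euv]; apply: degree_gt0 Euv.
have deg_split : \sum_(u <- V) degree u = #|` V| + \sum_(u <- V) (degree u).-1.
  rewrite -sum1_size -big_split /=; apply: eq_big_seq => u uV.
  by rewrite add1n prednK ?deg_gt0.
rewrite -sum_degree deg_split -[X in _ = X <-> _]addn0.
split=> [/eqP|partner_uniq].
  rewrite eqn_add2l sum_nat_seq_eq0 => /allP deg_le1 u v w uV vV wV Euv Euw.
  apply: contrapT => vw; have := deg_le1 u uV.
  by rewrite /= -subn1 subn_eq0 leqNgt (degree_gt1 uV vV wV Euv Euw vw).
apply/eqP; rewrite eqn_add2l sum_nat_seq_eq0; apply/allP => u uV.
have [v vV Euv] := has_partner u uV.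
by rewrite (degree_eq1 uV vV Euv) // => w wV Euw; apply: partner_uniq Euw Euv.
Qed.

End Matching.

Section LocalPointSymmetry.
Variables (R : realFieldType) (D : nat) (S : seq 'rV[R]_D) (V : {fset 'rV[R]_D}).
Let Q := hull S.
Hypothesis vertexP : forall v, is_vertex Q v <-> v \in V.

Let antipodal_in_V u v : strictly_antipodal Q u v -> v \in V.
Proof. by move/strictly_antipodal_vertex/vertexP. Qed.

Lemma lps_antipodal_partner : locally_point_symmetric Q V ->
  (forall u, u \in V -> exists2 v, v \in V & strictly_antipodal Q u v) /\
  (forall u v w, u \in V -> v \in V -> w \in V ->
     strictly_antipodal Q u v -> strictly_antipodal Q u w -> v = w).
Proof.
case=> p pP; split=> [u /pP[pV _ _ Eup _]|u v w /pP[pV _ _ _ cone_u] _ _].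
  by exists (p u).
have Qpu : Q (p u) by have [] := (vertexP (p u)).2 pV.
rewrite opp_cone_atE in cone_u.
by move=> /(opp_cone_antipodal_eq cone_u Qpu) -> /(opp_cone_antipodal_eq cone_u Qpu).
Qed.

Lemma antipodal_partner_even : ~~ odd #|` V| ->
  forall u, u \in V -> exists2 v, v \in V & strictly_antipodal Q u v.
Proof.
move=> V_even u uV; have u_vert := (vertexP u).2 uV.
case: (vertex_antipodal_partner u_vert) => [[v Euv]|Q_u].
  by exists v; first exact: antipodal_in_V Euv.
suff V1 : V = [fset u]%fset by move: V_even; rewrite V1 cardfs1.
apply/fsetP => v; rewrite inE; apply/idP/eqP => [/vertexP[Qv _]|->//].
exact: Q_u.
Qed.

Lemma uniq_antipodal_partner_lps :
  (forall u, u \in V -> exists2 v, v \in V & strictly_antipodal Q u v) ->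
  (forall u v w, u \in V -> v \in V -> w \in V ->
     strictly_antipodal Q u v -> strictly_antipodal Q u w -> v = w) ->
  locally_point_symmetric Q V.
Proof.
move=> has_partner partner_uniq.
have /choice[p pP] : forall u, exists v, u \in V -> v \in V /\ strictly_antipodal Q u v.
  move=> u; have [/has_partner[v vV Euv]|uV] := boolP (u \in V); first by exists v.
  by exists u.
exists p => u uV; have [pV Eup] := pP u uV; have [ppV Epp] := pP (p u) pV.
have Epu := strictly_antipodal_sym Eup.
have partner_p w : strictly_antipodal Q (p u) w -> w = u.
  by move=> Epw; have wV := antipodal_in_V Epw; apply: partner_uniq Epw Epu.
have partner_u w : strictly_antipodal Q u w -> w = p u.
  by move=> Euw; have wV := antipodal_in_V Euw; apply: partner_uniq Euw Eup.
split=> //; first by apply/eqP => /esym; case/strictly_antipodalP: Eup.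
- exact: partner_p.
- rewrite opp_cone_atE; apply: uniq_antipodal_cone => //; exact/vertexP.
Qed.

End LocalPointSymmetry.

Theorem lemma6 (R : realType) (D : nat) (Q : set 'rV[R]_D) (V : {fset 'rV[R]_D}) :
  is_polytope Q ->
  full_dim Q ->
  (forall v, is_vertex Q v <-> v \in V) ->
  locally_point_symmetric Q V <->
  (2 * #|` antipodal_pairs Q V| = #|` V|)%N.
Proof.
move=> [S ->] _ vertexP.
have -> : antipodal_pairs (hull S) V = edge_pairs V (strictly_antipodal (hull S)).
  by [].
have E_irr u v : strictly_antipodal (hull S) u v -> u <> v.
  by case/strictly_antipodalP.
have card_pairsE := card_edge_pairs_uniq (@strictly_antipodal_sym _ _ _) E_irr.
split=> [/(lps_antipodal_partner vertexP)[has_partner partner_uniq]|card_V].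
  exact/(card_pairsE _ has_partner).
have V_even : ~~ odd #|` V| by rewrite -card_V oddM.
have has_partner := antipodal_partner_even vertexP V_even.
apply: (uniq_antipodal_partner_lps vertexP has_partner).
exact/(card_pairsE _ has_partner).
Qed.
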